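(* Fix an integer $K\ge0$, $\kappa\ge2$ and $a\in\,]0,\infty[$. Consider the regime $\ell\to\infty$, $q\to0$, $\ell q\to a$. For all $\ell$ large enough and $q$ small enough (with $\ell q$ close enough to $a$), the matrix $(M^{K+1}_H(b,c))_{0\le b,c\le\ell}$ is stochastic (nonnegative entries, rows summing to $1$), and $$\forall b,c\in\{0,\dots,\ell\}\qquad \sum_{h=0}^c M_H(b,h)\le\sum_{h=0}^c M^{K+1}_H(b,h).$$ Equivalently, the quantile maps satisfy $\mathcal M'_H(b,u)\ge\mathcal M^{K+1}_H(b,u)$ for all $b\in\{0,\dots,\ell\}$, $u\in[0,1]$.
   Context: Let $q\in\,]0,1-1/\kappa[$ and $p=\kappa q/(\kappa-1)$. The lumped mutation matrix on Hamming classes $\{0,\dots,\ell\}$ is $$M_H(b,c)=\sum_{\substack{0\le k\le\ell-b,\ 0\le l\le b\\ k-l=c-b}}\binom{\ell-b}{k}\binom{b}{l}\Big(p\big(1-\tfrac1\kappa\big)\Big)^k\Big(1-p\big(1-\tfrac1\kappa\big)\Big)^{\ell-b-k}\Big(\frac p\kappa\Big)^l\Big(1-\frac p\kappa\Big)^{b-l}.$$ Assume $K+2\le\ell$. The modified matrix $M^{K+1}_H$ is defined as follows. For $b\in\{0,\dots,K+1\}$: $M^{K+1}_H(b,c)=M_H(c+1,c)$ if $0\le c<b$; $M^{K+1}_H(b,c)=M_H(b,c)$ if $b\le c\le K$; $M^{K+1}_H(b,c)=0$ if $K+2\le c\le\ell$; and $M^{K+1}_H(b,K+1)=1-\sum_{h=0}^{b-1}M_H(h+1,h)-\sum_{h=b}^KM_H(b,h)$.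 For $b\in\{K+2,\dots,\ell\}$: $M^{K+1}_H(b,c)=M_H(b,c)$ for all $c$. For $b\in\{0,\dots,\ell\}$, $u\in[0,1]$, $\mathcal M'_H(b,u)$ is the unique $c$ with $\sum_{h<c}M_H(b,h)<u\le\sum_{h\le c}M_H(b,h)$, and $\mathcal M^{K+1}_H(b,u)$ is defined in the same way with $M^{K+1}_H$ in place of $M_H$. *)

From Stdlib Require Import Reals Lra Lia Arith.
Open Scope R_scope.

Fixpoint sumR (f : nat -> R) (n : nat) : R :=
  match n with
  | O => 0
  | S m => sumR f m + f m
  end.

Definition pp (kappa : nat) (q : R) : R := INR kappa * q / (INR kappa - 1).

(* Lumped mutation matrix M_H(b,c) on Hamming classes {0..l}. *)
Definition MH (l kappa : nat) (q : R) (b c : nat) : R :=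
  let p := pp kappa q in
  let k' := INR kappa in
  sumR (fun k =>
    sumR (fun j =>
      if Nat.eqb (k + b) (c + j) then
        Binomial.C (l - b) k * Binomial.C b j
        * (p * (1 - 1 / k')) ^ k * (1 - p * (1 - 1 / k')) ^ (l - b - k)
        * (p / k') ^ j * (1 - p / k') ^ (b - j)
      else 0) (S b)) (S (l - b)).

Definition MHK (K l kappa : nat) (q : R) (b c : nat) : R :=
  if Nat.leb b (K + 1) then
    if Nat.ltb c b then MH l kappa q (c + 1) c
    else if Nat.leb c K then MH l kappa q b c
    else if Nat.eqb c (K + 1) then
      1 - sumR (fun h => MH l kappa q (h + 1) h) b
        - sumR (fun i => MH l kappa q b (b + i)) (K + 1 - b)
    else 0
  else MH l kappa q b c.

From Stdlib Require Import Reals Lra Lia Arith FunctionalExtensionality.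
Open Scope R_scope.

(* A site of the Hamming class b flips forward (away from the master sequence)
   with probability X = p(1-1/kappa) = q and backward with probability
   Y = p/kappa = q/(kappa-1) <= q, independently, so M_H(b,.) is the law of
   b + Bin(l-b, X) - Bin(b, Y).  We first develop this "lumped matrix" MM l X Y
   for arbitrary probabilities X, Y: it is stochastic, its cumulative sums
   below the diagonal are O(Y^(b-c)), its subdiagonal is at least Y (1-X)^l,
   and the mass it sends from b exactly to K+1 with no backward flip is a
   fixed positive binomial weight.  Independently of any probability, a purely
   combinatorial lemma shows that the modification M^{K+1} of an arbitrary
   nonnegative stochastic matrix is stochastic and dominates it cumulatively
   as soon as two inequalities (P2) and (P3) between its entries hold.  In the
   regime l q ~ a, q -> 0, the lumped-matrix estimates give (P2) and (P3),
   because Y = O(q) while (1-q)^l and the binomial weight stay bounded below. *)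

Lemma sumR_ext f g n : (forall i, (i < n)%nat -> f i = g i) -> sumR f n = sumR g n.
Proof.
  induction n as [|n IH]; simpl; intros H; [reflexivity|].
  rewrite IH by (intros; apply H; lia). rewrite H by lia. reflexivity.
Qed.

Lemma sumR_le f g n : (forall i, (i < n)%nat -> f i <= g i) -> sumR f n <= sumR g n.
Proof.
  induction n as [|n IH]; simpl; intros H; [lra|].
  assert (sumR f n <= sumR g n) by (apply IH; intros; apply H; lia).
  assert (f n <= g n) by (apply H; lia). lra.
Qed.

Lemma sumR_nonneg f n : (forall i, (i < n)%nat -> 0 <= f i) -> 0 <= sumR f n.
Proof.
  intros H. replace 0 with (sumR (fun _ => 0) n).
  - apply sumR_le. exact H.
  - induction n as [|n IH]; simpl; [reflexivity|]. rewrite IH by (intros; apply H; lia). ring.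
Qed.

Lemma sumR_plus f g n : sumR (fun i => f i + g i) n = sumR f n + sumR g n.
Proof. induction n as [|n IH]; simpl; [ring| rewrite IH; ring]. Qed.

Lemma sumR_scal c f n : sumR (fun i => c * f i) n = c * sumR f n.
Proof. induction n as [|n IH]; simpl; [ring| rewrite IH; ring]. Qed.

Lemma sumR_zero n : sumR (fun _ => 0) n = 0.
Proof. induction n as [|n IH]; simpl; [ring| rewrite IH; ring]. Qed.

Lemma sumR_le_const f c n : (forall i, (i < n)%nat -> f i <= c) -> sumR f n <= INR n * c.
Proof.
  induction n as [|n IH]; simpl sumR; intros H; [simpl; lra|].
  assert (sumR f n <= INR n * c) by (apply IH; intros; apply H; lia).
  assert (f n <= c) by (apply H; lia). rewrite S_INR. lra.
Qed.

Lemma sumR_split f n m : sumR f (n + m) = sumR f n + sumR (fun i => f (n + i)%nat) m.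
Proof.
  induction m as [|m IH]; simpl.
  - rewrite Nat.add_0_r; ring.
  - rewrite Nat.add_succ_r; simpl; rewrite IH; ring.
Qed.

Lemma sumR_swap (F : nat -> nat -> R) n m :
  sumR (fun i => sumR (fun j => F i j) m) n = sumR (fun j => sumR (fun i => F i j) n) m.
Proof.
  induction n as [|n IH]; simpl.
  - rewrite sumR_zero; reflexivity.
  - rewrite IH, <- sumR_plus. reflexivity.
Qed.

Lemma sumR_le_margin f g n i0 d : (forall i, (i < n)%nat -> f i <= g i) -> (i0 < n)%nat ->
  f i0 + d <= g i0 -> sumR f n + d <= sumR g n.
Proof.
  induction n as [|n IH]; intros H Hi Hd; [lia|]. simpl.
  destruct (Nat.eq_dec i0 n) as [->|Hne].
  - assert (sumR f n <= sumR g n) by (apply sumR_le; intros; apply H; lia). lra.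
  - assert (sumR f n + d <= sumR g n) by (apply IH; [intros; apply H; lia| lia| auto]).
    assert (f n <= g n) by (apply H; lia). lra.
Qed.

Lemma sumR_ge_term f n i0 : (forall i, (i < n)%nat -> 0 <= f i) -> (i0 < n)%nat -> f i0 <= sumR f n.
Proof.
  intros H Hi. assert (E := sumR_le_margin (fun _ => 0) f n i0 (f i0) H Hi).
  rewrite sumR_zero in E. lra.
Qed.

(* The link with Stdlib's [sum_f_R0], in which the binomial theorem is stated. *)
Lemma sumR_f_R0 f n : sumR f (S n) = sum_f_R0 f n.
Proof.
  induction n as [|n IH]; [simpl; ring|].
  change (sumR f (S (S n))) with (sumR f (S n) + f (S n)). rewrite IH. reflexivity.
Qed.

Definition modified (M : nat -> nat -> R) (K b c : nat) : R :=
  if Nat.leb b (K + 1) then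
    if Nat.ltb c b then M (c + 1)%nat c
    else if Nat.leb c K then M b c
    else if Nat.eqb c (K + 1) then
      1 - sumR (fun h => M (h + 1)%nat h) b
        - sumR (fun i => M b (b + i)%nat) (K + 1 - b)
    else 0
  else M b c.

Lemma MHK_modified K l kappa q : MHK K l kappa q = modified (MH l kappa q) K.
Proof. reflexivity. Qed.

Section Modification.
Variables (M : nat -> nat -> R) (K l : nat).
Hypothesis Hl : (K + 1 <= l)%nat.
Hypothesis P0 : forall b c, 0 <= M b c.
Hypothesis P1 : forall b, (b <= l)%nat -> sumR (fun c => M b c) (S l) = 1.
(* (P2): the corner entries M^{K+1}(b, K+1) are nonnegative. *)
Hypothesis P2 : forall b, (b <= K + 1)%nat ->
  sumR (fun h => M (h + 1)%nat h) b + sumR (fun i => M b (b + i)%nat) (K + 1 - b) <= 1.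
Hypothesis P3 : forall b c, (c + 2 <= b)%nat -> (b <= K + 1)%nat ->
  sumR (fun h => M b h) (S c) <= sumR (fun h => M (h + 1)%nat h) (S c).

Lemma modified_below b h : (b <= K + 1)%nat -> (h < b)%nat -> modified M K b h = M (h + 1)%nat h.
Proof.
  intros. unfold modified. destruct (Nat.leb_spec b (K + 1)); [|lia].
  destruct (Nat.ltb_spec h b); [reflexivity| lia].
Qed.

Lemma modified_middle b h : (b <= K + 1)%nat -> (b <= h)%nat -> (h <= K)%nat ->
  modified M K b h = M b h.
Proof.
  intros. unfold modified. destruct (Nat.leb_spec b (K + 1)); [|lia].
  destruct (Nat.ltb_spec h b); [lia|]. destruct (Nat.leb_spec h K); [reflexivity| lia].
Qed.

Lemma modified_corner b : (b <= K + 1)%nat -> modified M K b (K + 1) =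
  1 - sumR (fun h => M (h + 1)%nat h) b - sumR (fun i => M b (b + i)%nat) (K + 1 - b).
Proof.
  intros. unfold modified. destruct (Nat.leb_spec b (K + 1)); [|lia].
  destruct (Nat.ltb_spec (K + 1) b); [lia|]. destruct (Nat.leb_spec (K + 1) K); [lia|].
  rewrite Nat.eqb_refl. reflexivity.
Qed.

Lemma modified_beyond b h : (b <= K + 1)%nat -> (K + 2 <= h)%nat -> modified M K b h = 0.
Proof.
  intros. unfold modified. destruct (Nat.leb_spec b (K + 1)); [|lia].
  destruct (Nat.ltb_spec h b); [lia|]. destruct (Nat.leb_spec h K); [lia|].
  destruct (Nat.eqb_spec h (K + 1)); [lia| reflexivity].
Qed.

Lemma modified_far b h : (K + 1 < b)%nat -> modified M K b h = M b h.
Proof. intros. unfold modified. destruct (Nat.leb_spec b (K + 1)); [lia| reflexivity]. Qed.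

Lemma row_prefix_dominated b : (b <= K + 1)%nat ->
  sumR (fun h => M b h) b <= sumR (fun h => M (h + 1)%nat h) b.
Proof.
  intros Hb. destruct b as [|[|b]]; [simpl; lra| simpl; lra|].
  change (sumR (fun h => M (S (S b)) h) (S (S b)))
    with (sumR (fun h => M (S (S b)) h) (S b) + M (S (S b)) (S b)).
  change (sumR (fun h => M (h + 1)%nat h) (S (S b)))
    with (sumR (fun h => M (h + 1)%nat h) (S b) + M (S b + 1)%nat (S b)).
  replace (S b + 1)%nat with (S (S b)) by lia.
  assert (H := P3 (S (S b)) b ltac:(lia) Hb). lra.
Qed.

Lemma modified_row_mass b c : (b <= K + 1)%nat -> (K + 1 <= c)%nat ->
  sumR (fun h => modified M K b h) (S c) = 1.
Proof.
  intros Hb Hc. replace (S c) with (b + (K + 1 - b) + 1 + (c - K - 1))%nat by lia.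
  rewrite !sumR_split.
  rewrite (sumR_ext (fun h => modified M K b h) (fun h => M (h + 1)%nat h))
    by (intros; apply modified_below; lia).
  rewrite (sumR_ext (fun i => modified M K b (b + i)) (fun i => M b (b + i)%nat))
    by (intros; apply modified_middle; lia).
  rewrite (sumR_ext (fun i => modified M K b (b + (K + 1 - b) + 1 + i)) (fun _ => 0))
    by (intros; apply modified_beyond; lia).
  simpl sumR. replace (b + (K + 1 - b) + 0)%nat with (K + 1)%nat by lia.
  rewrite modified_corner, sumR_zero by auto. ring.
Qed.

Theorem modified_stochastic_dominates :
    (forall b c : nat, (b <= l)%nat -> (c <= l)%nat -> 0 <= modified M K b c) /\
    (forall b : nat, (b <= l)%nat -> sumR (fun c => modified M K b c) (S l) = 1) /\
    (forall b c : nat, (b <= l)%nat -> (c <= l)%nat ->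
       sumR (fun h => M b h) (S c) <= sumR (fun h => modified M K b h) (S c)).
Proof.
  split; [|split].
  - intros b c _ _. unfold modified. destruct (Nat.leb_spec b (K + 1)); [|apply P0].
    destruct (Nat.ltb_spec c b); [apply P0|]. destruct (Nat.leb_spec c K); [apply P0|].
    destruct (Nat.eqb_spec c (K + 1)); [| lra]. assert (HP2 := P2 b ltac:(lia)). lra.
  - intros b Hb. destruct (Nat.leb_spec b (K + 1)).
    + apply modified_row_mass; lia.
    + rewrite (sumR_ext _ (fun c => M b c)) by (intros; apply modified_far; lia). auto.
  - intros b c Hb Hc. destruct (Nat.leb_spec b (K + 1)) as [HbK|HbK].
    2:{ rewrite (sumR_ext (fun h => modified M K b h) (fun h => M b h))
          by (intros; apply modified_far; lia). lra. }
    destruct (Nat.ltb_spec c b); [|destruct (Nat.leb_spec c K)].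
    + rewrite (sumR_ext (fun h => modified M K b h) (fun h => M (h + 1)%nat h))
        by (intros; apply modified_below; lia).
      destruct (Nat.leb_spec (c + 2) b); [auto|].
      replace (S c) with b by lia. apply row_prefix_dominated; auto.
    + replace (S c) with (b + (S c - b))%nat by lia. rewrite !sumR_split.
      rewrite (sumR_ext (fun h => modified M K b h) (fun h => M (h + 1)%nat h))
        by (intros; apply modified_below; lia).
      rewrite (sumR_ext (fun i => modified M K b (b + i)) (fun i => M b (b + i)%nat))
        by (intros; apply modified_middle; lia).
      assert (H2 := row_prefix_dominated b HbK). lra.
    + rewrite modified_row_mass by lia. rewrite <- (P1 b Hb).
      replace (S l) with (S c + (l - c))%nat by lia. rewrite sumR_split.
      assert (0 <= sumR (fun i => M b (S c + i)%nat) (l - c)) by (apply sumR_nonneg; auto).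
      lra.
Qed.

End Modification.

Lemma pow_le1 z n : 0 <= z <= 1 -> z ^ n <= 1.
Proof. intros. rewrite <- (pow1 n). apply pow_incr. lra. Qed.

Lemma pow_decr z n m : 0 <= z <= 1 -> (n <= m)%nat -> z ^ m <= z ^ n.
Proof.
  intros Hz Hnm. replace m with (n + (m - n))%nat by lia. rewrite pow_add.
  assert (0 <= z ^ n) by (apply pow_le; lra).
  assert (z ^ (m - n) <= 1) by (apply pow_le1; auto).
  assert (0 <= z ^ (m - n)) by (apply pow_le; lra). nra.
Qed.

Lemma C_nonneg n k : 0 <= Binomial.C n k.
Proof.
  unfold Binomial.C. apply Rmult_le_pos; [apply pos_INR|].
  left; apply Rinv_0_lt_compat, Rmult_lt_0_compat; apply lt_0_INR, lt_O_fact.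
Qed.

Lemma C_sum2 n : sumR (fun k => Binomial.C n k) (S n) = 2 ^ n.
Proof.
  replace 2 with (1 + 1) by ring. rewrite Binomial.binomial, <- sumR_f_R0.
  apply sumR_ext; intros. rewrite !pow1; ring.
Qed.

Lemma C_n0 n : Binomial.C n 0 = 1.
Proof. unfold Binomial.C. rewrite Nat.sub_0_r. simpl. field. apply INR_fact_neq_0. Qed.

Lemma C_1 r : Binomial.C (S r) 1 = INR (S r).
Proof.
  unfold Binomial.C. replace (S r - 1)%nat with r by lia.
  rewrite fact_simpl, mult_INR. simpl (fact 1). change (INR 1) with 1.
  field. apply INR_fact_neq_0.
Qed.

(* r! r^m <= (r+m)!, since each of the m new factors is at least r. *)
Lemma fact_mul_pow_le r m : (fact r * r ^ m <= fact (r + m))%nat.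
Proof.
  induction m as [|m IH].
  - rewrite Nat.add_0_r; simpl; lia.
  - rewrite Nat.add_succ_r, fact_simpl, Nat.pow_succ_r'. nia.
Qed.

Lemma C_lower r m : INR r ^ m / INR (fact m) <= Binomial.C (r + m) m.
Proof.
  unfold Binomial.C. replace (r + m - m)%nat with r by lia.
  assert (H := le_INR _ _ (fact_mul_pow_le r m)). rewrite mult_INR, pow_INR in H.
  assert (0 < INR (fact m)) by (apply lt_0_INR, lt_O_fact).
  assert (0 < INR (fact r)) by (apply lt_0_INR, lt_O_fact).
  apply Rmult_le_reg_r with (INR (fact m) * INR (fact r)); [nra|].
  replace (INR r ^ m / INR (fact m) * (INR (fact m) * INR (fact r)))
    with (INR (fact r) * INR r ^ m) by (field; lra).
  replace (INR (fact (r + m)) / (INR (fact m) * INR (fact r)) * (INR (fact m) * INR (fact r)))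
    with (INR (fact (r + m))) by (field; lra).
  exact H.
Qed.

Lemma binomial_term_lower r m n x al : 0 <= x -> 0 < al <= 1 -> al <= INR r * x ->
  (m <= n)%nat -> al ^ n / INR (fact n) <= Binomial.C (r + m) m * x ^ m.
Proof.
  intros Hx Hal Hr Hmn.
  assert (Hfm : 1 <= INR (fact m)) by (apply (le_INR 1), lt_O_fact).
  assert (Hfmn : INR (fact m) <= INR (fact n)) by (apply le_INR, fact_le, Hmn).
  assert (Hpow_n : al ^ n <= al ^ m) by (apply pow_decr; [lra| exact Hmn]).
  assert (Hpow_m : al ^ m <= (INR r * x) ^ m) by (apply pow_incr; lra).
  assert (0 < al ^ n) by (apply pow_lt; lra).
  eapply Rle_trans; [| apply Rmult_le_compat_r; [apply pow_le, Hx| apply C_lower]].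
  replace (INR r ^ m / INR (fact m) * x ^ m) with ((INR r * x) ^ m / INR (fact m))
    by (rewrite Rpow_mult_distr; field; lra).
  apply Rle_trans with (al ^ n / INR (fact m)).
  - apply Rmult_le_compat_l; [lra|]. apply Rinv_le_contravar; lra.
  - apply Rmult_le_compat_r; [left; apply Rinv_0_lt_compat; lra| lra].
Qed.

Lemma exp_pow t n : exp t ^ n = exp (INR n * t).
Proof.
  induction n as [|n IH]; simpl pow.
  - simpl INR. rewrite Rmult_0_l, exp_0; ring.
  - rewrite IH, S_INR, <- exp_plus. f_equal. ring.
Qed.

Lemma exp_lower_one_minus x : 0 <= x <= 1/2 -> exp (- (2 * x)) <= 1 - x.
Proof.
  intros Hx. rewrite exp_Ropp.
  assert (H := exp_ineq1_le (2 * x)). assert (He := exp_pos (2 * x)).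
  apply Rmult_le_reg_l with (exp (2 * x)); auto.
  rewrite Rinv_r by lra. nra.
Qed.

Lemma pow_one_minus_lower x n a : 0 <= x <= 1/2 -> INR n * x <= 3 / 2 * a ->
  exp (- (3 * a)) <= (1 - x) ^ n.
Proof.
  intros Hx Hn. apply Rle_trans with (exp (- (2 * x)) ^ n).
  - rewrite exp_pow. destruct (Req_dec (INR n * - (2 * x)) (- (3 * a))) as [E|E].
    + rewrite E; lra.
    + left. apply exp_increasing. lra.
  - apply pow_incr. split; [left; apply exp_pos| apply exp_lower_one_minus; auto].
Qed.

Definition Aw (n : nat) (x : R) (k : nat) : R := Binomial.C n k * x ^ k * (1 - x) ^ (n - k).

Lemma Aw_nonneg n x k : 0 <= x <= 1 -> 0 <= Aw n x k.
Proof.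
  intros. unfold Aw. apply Rmult_le_pos; [apply Rmult_le_pos|];
    [apply C_nonneg| apply pow_le; lra| apply pow_le; lra].
Qed.

Lemma Aw_sum n x : sumR (fun k => Aw n x k) (S n) = 1.
Proof.
  rewrite sumR_f_R0, <- (pow1 n). replace 1 with (x + (1 - x)) at 1 by ring.
  rewrite Binomial.binomial. reflexivity.
Qed.

Lemma Aw_split n x m y k : Aw n x k = sumR (fun j => Aw n x k * Aw m y j) (S m).
Proof. rewrite sumR_scal, Aw_sum. ring. Qed.

(* The lumped matrix with forward flip probability X and backward flip
   probability Y: MM l X Y b c is the probability that b + Bin(l-b, X)
   - Bin(b, Y) = c for independent binomial variables. *)
Definition MM (l : nat) (X Y : R) (b c : nat) : R :=
  sumR (fun k => sumR (fun j =>
    if Nat.eqb (k + b) (c + j) then Aw (l - b) X k * Aw b Y j else 0) (S b)) (S (l - b)).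

Lemma MH_as_MM l kappa q : 1 < INR kappa -> MH l kappa q = MM l q (q / (INR kappa - 1)).
Proof.
  intros Hk.
  assert (HX : pp kappa q * (1 - 1 / INR kappa) = q) by (unfold pp; field; lra).
  assert (HY : pp kappa q / INR kappa = q / (INR kappa - 1)) by (unfold pp; field; lra).
  apply functional_extensionality; intro b. apply functional_extensionality; intro c.
  unfold MH, MM, Aw. cbv zeta. rewrite HX, HY.
  apply sumR_ext; intros k _. apply sumR_ext; intros j _.
  destruct (Nat.eqb _ _); [ring| reflexivity].
Qed.

Lemma sumR_indicator t j v n : (j <= t)%nat ->
  sumR (fun h => if Nat.eqb t (h + j) then v else 0) n = if Nat.ltb t (n + j) then v else 0.
Proof.
  intros Hj. induction n as [|n IH].
  - simpl. destruct (Nat.ltb_spec t j); [lia| reflexivity].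
  - simpl sumR. rewrite IH.
    destruct (Nat.ltb_spec t (n + j)), (Nat.eqb_spec t (n + j)), (Nat.ltb_spec t (S n + j));
      try lia; ring.
Qed.

Section LumpedMatrix.
Variables (l : nat) (X Y : R).
Hypothesis HX : 0 <= X <= 1.
Hypothesis HY : 0 <= Y <= 1.

Lemma MM_nonneg b c : 0 <= MM l X Y b c.
Proof.
  unfold MM. apply sumR_nonneg; intros k _. apply sumR_nonneg; intros j _.
  destruct (Nat.eqb _ _); [apply Rmult_le_pos; apply Aw_nonneg; auto| lra].
Qed.

Lemma MM_cumulative b c : sumR (fun h => MM l X Y b h) (S c) =
  sumR (fun k => sumR (fun j =>
    if Nat.leb (k + b) (c + j) then Aw (l - b) X k * Aw b Y j else 0) (S b)) (S (l - b)).
Proof.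
  unfold MM. rewrite sumR_swap. apply sumR_ext; intros k Hk.
  rewrite sumR_swap. apply sumR_ext; intros j Hj.
  rewrite sumR_indicator by lia.
  destruct (Nat.ltb_spec (k + b) (S c + j)), (Nat.leb_spec (k + b) (c + j));
    try lia; reflexivity.
Qed.

Lemma MM_row_sum b : (b <= l)%nat -> sumR (fun h => MM l X Y b h) (S l) = 1.
Proof.
  intros Hb. rewrite MM_cumulative, <- (Aw_sum (l - b) X).
  apply sumR_ext; intros k Hk. etransitivity; [| symmetry; apply (Aw_split (l - b) X b Y k)].
  apply sumR_ext; intros j Hj. destruct (Nat.leb_spec (k + b) (l + j)); [reflexivity| lia].
Qed.

(* Going from b down to c < b needs at least b - c backward flips. *)
Lemma MM_cumulative_below b c : (c < b)%nat ->
  sumR (fun h => MM l X Y b h) (S c) <= 2 ^ b * Y ^ (b - c).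
Proof.
  intros Hcb. rewrite MM_cumulative.
  set (S0 := sumR (fun j => if Nat.leb b (c + j) then Aw b Y j else 0) (S b)).
  apply Rle_trans with (sumR (fun k => Aw (l - b) X k * S0) (S (l - b))).
  - apply sumR_le; intros k _. unfold S0. rewrite <- sumR_scal. apply sumR_le; intros j _.
    assert (0 <= Aw (l - b) X k * Aw b Y j) by (apply Rmult_le_pos; apply Aw_nonneg; auto).
    destruct (Nat.leb_spec (k + b) (c + j)), (Nat.leb_spec b (c + j)); try lia; lra.
  - replace (sumR (fun k => Aw (l - b) X k * S0) (S (l - b))) with S0.
    2:{ rewrite <- (Rmult_1_l S0) at 1. rewrite <- (Aw_sum (l - b) X), Rmult_comm, <- sumR_scal.
        apply sumR_ext; intros. ring. }
    unfold S0. rewrite <- C_sum2, Rmult_comm, <- sumR_scal. apply sumR_le; intros j _.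
    assert (0 <= Binomial.C b j) by apply C_nonneg.
    destruct (Nat.leb_spec b (c + j)).
    + unfold Aw. assert (Y ^ j <= Y ^ (b - c)) by (apply pow_decr; auto; lia).
      assert ((1 - Y) ^ (b - j) <= 1) by (apply pow_le1; lra).
      assert (0 <= (1 - Y) ^ (b - j)) by (apply pow_le; lra).
      assert (0 <= Y ^ j) by (apply pow_le; lra).
      assert (0 <= Binomial.C b j * Y ^ j) by nra.
      nra.
    + assert (0 <= Y ^ (b - c)) by (apply pow_le; lra). nra.
Qed.

Lemma MM_subdiagonal_upper h : MM l X Y (h + 1) h <= 2 ^ (h + 1) * Y.
Proof.
  apply Rle_trans with (sumR (fun c => MM l X Y (h + 1) c) (S h)).
  - apply (sumR_ge_term (fun c => MM l X Y (h + 1) c)); [intros; apply MM_nonneg| lia].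
  - eapply Rle_trans; [apply MM_cumulative_below; lia|].
    replace (h + 1 - h)%nat with 1%nat by lia. lra.
Qed.

(* Any row up to K keeps, besides its mass on [0, K], the weight of the
   event "exactly K+1-b forward flips and no backward flip", which lands
   in class K+1. *)
Lemma MM_mass_to_K_plus_1 b K : (b <= K + 1)%nat -> (K + 1 <= l)%nat ->
  sumR (fun h => MM l X Y b h) (S K) + Aw (l - b) X (K + 1 - b) * Aw b Y 0 <= 1.
Proof.
  intros Hb HK. rewrite MM_cumulative, <- (Aw_sum (l - b) X).
  assert (Hrow : forall k j, (if Nat.leb (k + b) (K + j) then Aw (l - b) X k * Aw b Y j else 0)
                               <= Aw (l - b) X k * Aw b Y j).
  { intros k j.
    assert (0 <= Aw (l - b) X k * Aw b Y j) by (apply Rmult_le_pos; apply Aw_nonneg; auto).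
    destruct (Nat.leb _ _); lra. }
  apply sumR_le_margin with (i0 := (K + 1 - b)%nat); [| lia|].
  - intros k _. eapply Rle_trans; [| right; symmetry; apply (Aw_split (l - b) X b Y k)].
    apply sumR_le; intros j _. apply Hrow.
  - eapply Rle_trans; [| right; symmetry; apply (Aw_split (l - b) X b Y (K + 1 - b))].
    apply sumR_le_margin with (i0 := 0%nat); [intros; apply Hrow| lia|].
    destruct (Nat.leb_spec (K + 1 - b + b) (K + 0)); [lia| lra].
Qed.

(* Hypothesis (P2) of the modification holds as soon as the weight above
   beats K+1 subdiagonal entries. *)
Lemma MM_diagonal_budget b K : (b <= K + 1)%nat -> (K + 1 <= l)%nat ->
  INR (K + 1) * (2 ^ (K + 1) * Y) <= Aw (l - b) X (K + 1 - b) * Aw b Y 0 ->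
  sumR (fun h => MM l X Y (h + 1) h) b + sumR (fun i => MM l X Y b (b + i)) (K + 1 - b) <= 1.
Proof.
  intros Hb HK Hw.
  assert (Hsub : sumR (fun h => MM l X Y (h + 1) h) b <= INR b * (2 ^ (K + 1) * Y)).
  { apply sumR_le_const; intros h Hh. eapply Rle_trans; [apply MM_subdiagonal_upper|].
    apply Rmult_le_compat_r; [lra| apply Rle_pow; [lra| lia]]. }
  assert (Hdiag : sumR (fun i => MM l X Y b (b + i)) (K + 1 - b)
                  <= sumR (fun h => MM l X Y b h) (S K)).
  { replace (S K) with (b + (K + 1 - b))%nat by lia. rewrite sumR_split.
    assert (0 <= sumR (fun h => MM l X Y b h) b) by (apply sumR_nonneg; intros; apply MM_nonneg).
    lra. }
  assert (HbK : INR b <= INR (K + 1)) by (apply le_INR; lia).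
  assert (0 <= 2 ^ (K + 1) * Y) by (apply Rmult_le_pos; [apply pow_le|]; lra).
  assert (INR b * (2 ^ (K + 1) * Y) <= INR (K + 1) * (2 ^ (K + 1) * Y)) by nra.
  assert (HT := MM_mass_to_K_plus_1 b K Hb HK). lra.
Qed.

Hypothesis HYX : Y <= X.

(* One backward flip and nothing else: M(c+1, c) >= Y (1-X)^l. *)
Lemma MM_subdiagonal_lower c : (c + 1 <= l)%nat -> Y * (1 - X) ^ l <= MM l X Y (c + 1) c.
Proof.
  intros Hc. unfold MM.
  assert (Hterm : forall k j, 0 <= if Nat.eqb (k + (c + 1)) (c + j)
                                    then Aw (l - (c + 1)) X k * Aw (c + 1) Y j else 0).
  { intros k j. destruct (Nat.eqb _ _); [apply Rmult_le_pos; apply Aw_nonneg; auto| lra]. }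
  eapply Rle_trans; [| apply sumR_ge_term with (i0 := 0%nat);
                         [intros; apply sumR_nonneg; intros; apply Hterm| lia]].
  eapply Rle_trans; [| apply sumR_ge_term with (i0 := 1%nat); [intros; apply Hterm| lia]].
  rewrite Nat.eqb_refl.
  unfold Aw. rewrite C_n0. replace (c + 1)%nat with (S c) by lia. rewrite C_1.
  replace (S c - 1)%nat with c by lia. rewrite pow_O, pow_1, Nat.sub_0_r.
  assert (H1 : (1 - X) ^ l <= (1 - X) ^ (l - S c) * (1 - Y) ^ c).
  { apply Rle_trans with ((1 - X) ^ (l - S c) * (1 - X) ^ c).
    - rewrite <- pow_add. apply pow_decr; [lra| lia].
    - apply Rmult_le_compat_l; [apply pow_le; lra| apply pow_incr; lra]. }
  assert (1 <= INR (S c)) by (rewrite S_INR; assert (0 <= INR c) by apply pos_INR; lra).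
  assert (0 <= Y * ((1 - X) ^ (l - S c) * (1 - Y) ^ c))
    by (apply Rmult_le_pos; [| apply Rmult_le_pos; apply pow_le]; lra).
  replace (1 * 1 * (1 - X) ^ (l - S c) * (INR (S c) * Y * (1 - Y) ^ c))
    with (INR (S c) * (Y * ((1 - X) ^ (l - S c) * (1 - Y) ^ c))) by ring.
  assert (Y * (1 - X) ^ l <= Y * ((1 - X) ^ (l - S c) * (1 - Y) ^ c))
    by (apply Rmult_le_compat_l; lra).
  nra.
Qed.

Lemma MM_below_subdiagonal b c K : (c + 2 <= b)%nat -> (b <= K + 1)%nat -> (K + 1 <= l)%nat ->
  2 ^ (K + 1) * Y <= (1 - X) ^ l ->
  sumR (fun h => MM l X Y b h) (S c) <= sumR (fun h => MM l X Y (h + 1) h) (S c).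
Proof.
  intros Hcb Hb Hl Hsmall.
  eapply Rle_trans; [apply MM_cumulative_below; lia|].
  apply Rle_trans with (2 ^ (K + 1) * Y ^ 2).
  { apply Rmult_le_compat; [apply pow_le; lra| apply pow_le; lra|
      apply Rle_pow; [lra| lia]| apply pow_decr; [lra| lia]]. }
  apply Rle_trans with (Y * (1 - X) ^ l).
  { replace (2 ^ (K + 1) * Y ^ 2) with (Y * (2 ^ (K + 1) * Y)) by ring.
    apply Rmult_le_compat_l; lra. }
  eapply Rle_trans; [apply (MM_subdiagonal_lower c); lia|].
  apply (sumR_ge_term (fun h => MM l X Y (h + 1) h) (S c) c); [intros; apply MM_nonneg| lia].
Qed.

End LumpedMatrix.

Lemma shifted_weight_lower l X Y K b al : 0 <= Y <= X -> X <= 1 -> 0 < al <= 1 ->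
  al <= INR (l - (K + 1)) * X -> (b <= K + 1)%nat -> (K + 1 <= l)%nat ->
  al ^ (K + 1) / INR (fact (K + 1)) * (1 - X) ^ l <= Aw (l - b) X (K + 1 - b) * Aw b Y 0.
Proof.
  intros HYX HX Hal Hr Hb Hl.
  set (m := (K + 1 - b)%nat). set (r := (l - (K + 1))%nat).
  replace (l - b)%nat with (r + m)%nat by (unfold r, m; lia).
  unfold Aw. rewrite C_n0, pow_O, Nat.sub_0_r. replace (r + m - m)%nat with r by lia.
  assert (Hbin := binomial_term_lower r m (K + 1) X al ltac:(lra) Hal Hr ltac:(unfold m; lia)).
  assert (Hpow : (1 - X) ^ l <= (1 - X) ^ r * (1 - Y) ^ b).
  { apply Rle_trans with ((1 - X) ^ r * (1 - X) ^ b).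
    - rewrite <- pow_add. apply pow_decr; [lra| unfold r; lia].
    - apply Rmult_le_compat_l; [apply pow_le; lra| apply pow_incr; lra]. }
  assert (0 <= al ^ (K + 1) / INR (fact (K + 1))).
  { apply Rmult_le_pos; [apply pow_le; lra| left; apply Rinv_0_lt_compat, lt_0_INR, lt_O_fact]. }
  assert (0 <= (1 - X) ^ l) by (apply pow_le; lra).
  replace (Binomial.C (r + m) m * X ^ m * (1 - X) ^ r * (1 * 1 * (1 - Y) ^ b))
    with ((Binomial.C (r + m) m * X ^ m) * ((1 - X) ^ r * (1 - Y) ^ b)) by ring.
  apply Rmult_le_compat; lra.
Qed.

Lemma regime_estimates K a l q : 0 < a -> (2 * (K + 1) <= l)%nat -> 0 <= q <= 1/2 ->
  Rabs (INR l * q - a) < a / 2 ->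
  exp (- (3 * a)) <= (1 - q) ^ l /\ Rmin 1 (a / 4) <= INR (l - (K + 1)) * q.
Proof.
  intros Ha Hl Hq Hlq. apply Rabs_def2 in Hlq.
  split; [apply pow_one_minus_lower; lra|].
  assert (Hhalf : INR l <= 2 * INR (l - (K + 1))).
  { assert (H := le_INR l (2 * (l - (K + 1))) ltac:(lia)).
    rewrite mult_INR in H. simpl (INR 2) in H. lra. }
  eapply Rle_trans; [apply Rmin_r|]. nra.
Qed.

(* The uniform lower bound min(1, a/4)^(K+1) / (K+1)! provided by
   [shifted_weight_lower] in this regime. *)
Definition weight_floor (K : nat) (a : R) : R := Rmin 1 (a / 4) ^ (K + 1) / INR (fact (K + 1)).

Lemma weight_floor_bounds K a : 0 < a -> 0 < weight_floor K a <= 1.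
Proof.
  intros Ha. unfold weight_floor.
  assert (Hal : 0 < Rmin 1 (a / 4) <= 1) by (split; [apply Rmin_pos; lra| apply Rmin_l]).
  assert (1 <= INR (fact (K + 1))) by (apply (le_INR 1), lt_O_fact).
  assert (Hpow : 0 < Rmin 1 (a / 4) ^ (K + 1) <= 1) by (split; [apply pow_lt| apply pow_le1]; lra).
  split; [apply Rdiv_lt_0_compat; lra|].
  apply Rmult_le_reg_r with (INR (fact (K + 1))); [lra|].
  unfold Rdiv. rewrite Rmult_assoc, Rinv_l by lra. lra.
Qed.

Lemma backward_rate_bounds kappa q : 2 <= INR kappa -> 0 <= q ->
  0 <= q / (INR kappa - 1) <= q.
Proof.
  intros Hk Hq. split; [apply Rmult_le_pos; [lra| left; apply Rinv_0_lt_compat; lra]|].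
  apply Rmult_le_reg_r with (INR kappa - 1); [lra|].
  unfold Rdiv. rewrite Rmult_assoc, Rinv_l; nra.
Qed.

Lemma regime_modification_hypotheses K a l q Y :
  0 < a -> (2 * (K + 1) <= l)%nat -> 0 <= Y <= q -> q <= 1/2 ->
  Rabs (INR l * q - a) < a / 2 ->
  INR (K + 1) * 2 ^ (K + 1) * q <= weight_floor K a * exp (- (3 * a)) ->
  (forall b, (b <= K + 1)%nat ->
     sumR (fun h => MM l q Y (h + 1) h) b + sumR (fun i => MM l q Y b (b + i)) (K + 1 - b) <= 1) /\
  (forall b c, (c + 2 <= b)%nat -> (b <= K + 1)%nat ->
     sumR (fun h => MM l q Y b h) (S c) <= sumR (fun h => MM l q Y (h + 1) h) (S c)).
Proof.
  intros Ha Hl HY Hq Hlq Hsmall.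
  destruct (regime_estimates K a l q Ha Hl ltac:(lra) Hlq) as [Hexp Hfwd].
  destruct (weight_floor_bounds K a Ha) as [Hfloor0 Hfloor1].
  assert (HK : 1 <= INR (K + 1)) by (apply (le_INR 1); lia).
  assert (0 <= 2 ^ (K + 1) * Y) by (apply Rmult_le_pos; [apply pow_le|]; lra).
  assert (0 <= 2 ^ (K + 1) * (q - Y)) by (apply Rmult_le_pos; [apply pow_le|]; lra).
  assert (Hbudget : INR (K + 1) * (2 ^ (K + 1) * Y) <= weight_floor K a * (1 - q) ^ l).
  { apply Rle_trans with (weight_floor K a * exp (- (3 * a))); [nra|].
    apply Rmult_le_compat_l; lra. }
  split.
  - intros b Hb. apply MM_diagonal_budget; try lra; try lia.
    eapply Rle_trans; [exact Hbudget|].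
    apply shifted_weight_lower; try lra; try lia.
    split; [apply Rmin_pos; lra| apply Rmin_l].
  - intros b c Hcb Hb. apply MM_below_subdiagonal with (K := K); try lra; try lia.
    assert (weight_floor K a * (1 - q) ^ l <= (1 - q) ^ l) by (pose proof (pow_le (1 - q) l); nra).
    nra.
Qed.

Theorem mainTheorem3 (K kappa : nat) (a : R) :
  (2 <= kappa)%nat -> 0 < a ->
  exists (L0 : nat) (delta eps : R), 0 < delta /\ 0 < eps /\
  forall (l : nat) (q : R),
    (L0 <= l)%nat -> (K + 2 <= l)%nat ->
    0 < q -> q < 1 - 1 / INR kappa -> q < delta ->
    Rabs (INR l * q - a) < eps ->
    (* stochastic *)
    (forall b c : nat, (b <= l)%nat -> (c <= l)%nat -> 0 <= MHK K l kappa q b c) /\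
    (forall b : nat, (b <= l)%nat -> sumR (fun c => MHK K l kappa q b c) (S l) = 1) /\
    (* stochastic domination of cumulative sums *)
    (forall b c : nat, (b <= l)%nat -> (c <= l)%nat ->
       sumR (fun h => MH l kappa q b h) (S c) <= sumR (fun h => MHK K l kappa q b h) (S c)).
Proof.
  intros Hkappa Ha.
  set (c0 := weight_floor K a * exp (- (3 * a))).
  set (B := INR (K + 1) * 2 ^ (K + 1)).
  assert (Hc0 : 0 < c0)
    by (apply Rmult_lt_0_compat; [apply (weight_floor_bounds K a Ha)| apply exp_pos]).
  assert (HB : 0 < B) by (apply Rmult_lt_0_compat; [apply lt_0_INR; lia| apply pow_lt; lra]).
  exists (2 * (K + 1))%nat, (Rmin (1/2) (c0 / B)), (a / 2).
  split; [apply Rmin_pos; [lra| apply Rdiv_lt_0_compat; lra]| split; [lra|]].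
  intros l q HL _ Hq _ Hqd Hlq.
  assert (Hq2 : q <= 1/2) by (pose proof (Rmin_l (1/2) (c0 / B)); lra).
  assert (HqB : B * q <= c0).
  { pose proof (Rmin_r (1/2) (c0 / B)).
    apply Rmult_le_reg_r with (/ B); [apply Rinv_0_lt_compat; lra|].
    replace (B * q * / B) with q by (field; lra). lra. }
  assert (Hk : 2 <= INR kappa) by (apply (le_INR 2); exact Hkappa).
  pose proof (backward_rate_bounds kappa q Hk ltac:(lra)) as HY.
  destruct (regime_modification_hypotheses K a l q (q / (INR kappa - 1)) Ha HL HY Hq2 Hlq HqB)
    as [P2 P3].
  rewrite MHK_modified, (MH_as_MM l kappa q) by lra.
  apply modified_stochastic_dominates; [lia| | exact (MM_row_sum l q _)| exact P2| exact P3].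
  intros b c. apply MM_nonneg; lra.
Qed.
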